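(* Assume GCH. Let $\lambda<\kappa$ be infinite cardinals with $\mathrm{cf}(\kappa)\notin\{\mu^+ : \mathrm{cf}(\mu)=\omega\}$. Then every $(\lambda,\kappa)$-graph contains an $(\aleph_0,\kappa)$-subgraph, or otherwise a collection of pairwise disjoint $(\aleph_0,\kappa_i)$-subgraphs, $i<\mathrm{cf}(\kappa)$, where $\{\kappa_i : i<\mathrm{cf}(\kappa)\}$ is cofinal in $\kappa$.
   Context: For infinite cardinals $\lambda<\kappa$, a $(\lambda,\kappa)$-graph is a bipartite graph with bipartition $(A,B)$, $|A|=\lambda$, $|B|=\kappa$, in which every vertex $b\in B$ has infinitely many neighbours in $A$. An $(\aleph_0,\nu)$-subgraph of such a graph is a subgraph with bipartition $(C,D)$, $C\subseteq A$, $D\subseteq B$, which is itself an $(\aleph_0,\nu)$-graph. *)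

(* cardinals are represented by types, compared via injections. *)
From Stdlib Require Import List Classical.

Definition le_card (X Y : Type) : Prop :=
  exists f : X -> Y, forall x y, f x = f y -> x = y.

Definition eq_card (X Y : Type) : Prop :=
  exists f : X -> Y, (forall x y, f x = f y -> x = y) /\ (forall y, exists x, f x = y).

Definition lt_card (X Y : Type) : Prop := le_card X Y /\ ~ le_card Y X.

Definition finite_type (X : Type) : Prop := exists l : list X, forall x, In x l.
Definition infinite_type (X : Type) : Prop := ~ finite_type X.

Definition infinite_set {X : Type} (S : X -> Prop) : Prop :=
  ~ exists l : list X, forall x, S x -> In x l.

Definition sub {X : Type} (S : X -> Prop) : Type := {x : X | S x}.

Definition GCH : Prop :=
  forall X Y : Type, infinite_type X ->
    le_card X Y -> le_card Y (X -> Prop) ->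
    eq_card Y X \/ eq_card Y (X -> Prop).

Definition strict_well_order {X : Type} (R : X -> X -> Prop) : Prop :=
  (forall x, ~ R x x) /\
  (forall x y z, R x y -> R y z -> R x z) /\
  (forall x y, R x y \/ x = y \/ R y x) /\
  well_founded R.

(* R is a well-order of X of initial order type, i.e. X with R is (isomorphic
   to) the von Neumann cardinal |X|: every proper initial segment is smaller. *)
Definition initial_well_order {X : Type} (R : X -> X -> Prop) : Prop :=
  strict_well_order R /\ forall x : X, lt_card (sub (fun y => R y x)) X.

Definition cofinal_in {X : Type} (R : X -> X -> Prop) (S : X -> Prop) : Prop :=
  forall x, exists y, S y /\ (R x y \/ x = y).

Definition is_cf (X Y : Type) : Prop :=
  exists R : X -> X -> Prop, initial_well_order R /\
    (exists S : X -> Prop, cofinal_in R S /\ eq_card (sub S) Y) /\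
    (forall S : X -> Prop, cofinal_in R S -> le_card Y (sub S)).

Definition is_succ_card (M N : Type) : Prop :=
  lt_card M N /\ forall Z : Type, lt_card M Z -> le_card N Z.

(* A (lambda,kappa)-graph: bipartite graph given by the edge relation
   E : A -> B -> Prop between the sides A (|A| = lambda) and B (|B| = kappa),
   every b in B having infinitely many neighbours in A. *)
Definition bip_graph {A B : Type} (E : A -> B -> Prop) : Prop :=
  forall b : B, infinite_set (fun a => E a b).

(* (C, D) with C ⊆ A, D ⊆ B spans an (aleph_0, nu)-subgraph of E, where nu is
   the cardinality of the type N: |C| = aleph_0, |D| = nu, and every d in D has
   infinitely many neighbours in C. *)
Definition aleph0_subgraph {A B : Type} (E : A -> B -> Prop)
    (C : A -> Prop) (D : B -> Prop) (N : Type) : Prop :=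
  eq_card (sub C) nat /\ eq_card (sub D) N /\
  forall b, D b -> infinite_set (fun a => C a /\ E a b).

From Stdlib Require Import List Classical ClassicalEpsilon FunctionalExtensionality
  PropExtensionality Arith Lia FinFun Wellfounded.
From mathcomp Require ssreflect ssrbool eqtype boolp wochoice.

(* Assume there is no (aleph_0, kappa)-subgraph: then every countable set of vertices of A is
   infinitely joined to fewer than kappa vertices of B.  Under GCH, lambda^omega <= lambda^+,
   and the hypothesis on cf(kappa) rules out the only case in which this reaches kappa, so A
   has fewer than kappa countable subsets.  The blocks (C_i, D_i), i < cf(kappa), are built by
   transfinite recursion.  At stage i, the vertices already used and those infinitely joined
   to the union U of the earlier C_j are fewer than kappa: either cf(kappa) = omega and U is
   countable, or U is smaller than cf(kappa) and then, again by GCH and the cofinality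
   hypothesis, has fewer than cf(kappa) countable subsets.  Each of the kappa remaining
   vertices has a countable neighbourhood outside U, and by pigeonhole one such neighbourhood
   C_i is shared by a set D_i at least as large as the i-th initial segment of kappa. *)

(** * Comparing cardinalities *)

Lemma le_card_refl X : le_card X X.
Proof. exists (fun x => x); auto. Qed.

Lemma le_card_trans X Y Z : le_card X Y -> le_card Y Z -> le_card X Z.
Proof. intros [f Hf] [g Hg]; exists (fun x => g (f x)); auto. Qed.

Lemma eq_card_le X Y : eq_card X Y -> le_card X Y.
Proof. intros [f [Hf _]]; exists f; auto. Qed.

Lemma eq_card_refl X : eq_card X X.
Proof. exists (fun x => x); split; eauto. Qed.

Lemma le_card_rel X Y (F : X -> Y -> Prop) :
  (forall x, exists y, F x y) -> (forall x x' y, F x y -> F x' y -> x = x') -> le_card X Y.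
Proof.
  intros Htot Hinj; destruct (choice F Htot) as [f Hf]; exists f.
  intros x x' e; apply (Hinj x x' (f x)); [|rewrite e]; apply Hf.
Qed.

Lemma eq_card_sym X Y : eq_card X Y -> eq_card Y X.
Proof.
  intros [f [Hinj Hsurj]]; destruct (choice _ Hsurj) as [g Hg]; exists g; split.
  - intros y y' e; rewrite <- (Hg y), <- (Hg y'), e; reflexivity.
  - intros x; exists (f x); apply Hinj, Hg.
Qed.

Lemma eq_card_trans X Y Z : eq_card X Y -> eq_card Y Z -> eq_card X Z.
Proof.
  intros [f [Hf Sf]] [g [Hg Sg]]; exists (fun x => g (f x)); split; auto.
  intros z; destruct (Sg z) as [y <-]; destruct (Sf y) as [x <-]; eauto.
Qed.

Lemma eq_card_ge X Y : eq_card X Y -> le_card Y X.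
Proof. intros H; apply eq_card_le, eq_card_sym, H. Qed.

Lemma sub_inj X (P : X -> Prop) (x y : sub P) : proj1_sig x = proj1_sig y -> x = y.
Proof. destruct x, y; simpl; intros <-; f_equal; apply proof_irrelevance. Qed.

Lemma le_card_sub X (P : X -> Prop) : le_card (sub P) X.
Proof. exists (@proj1_sig _ _); apply sub_inj. Qed.

Lemma le_card_subset X (P Q : X -> Prop) : (forall x, P x -> Q x) -> le_card (sub P) (sub Q).
Proof.
  intros H; apply (le_card_rel _ _ (fun p q => proj1_sig p = proj1_sig q)).
  - intros [x Px]; exists (exist Q x (H x Px)); reflexivity.
  - intros p p' q e e'; apply sub_inj; exact (eq_trans e (eq_sym e')).
Qed.

Lemma cantor_bernstein X Y : le_card X Y -> le_card Y X -> eq_card X Y.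
Proof.
  intros [f Hf] [g Hg].
  set (C := fun x => exists n x0, (forall y, g y <> x0) /\ x = Nat.iter n (fun z => g (f z)) x0).
  assert (Hng : forall x, ~ C x -> exists y, g y = x).
  { intros x Hx; apply NNPP; intros N; apply Hx; exists 0, x; split; simpl; auto.
    intros y E; apply N; eauto. }
  (* [h] is [f] on the [g \o f]-orbits of the points outside the range of [g],
     and [g^-1] elsewhere. *)
  set (h := fun x => match excluded_middle_informative (C x) with
                     | left _ => f x
                     | right n => proj1_sig (constructive_indefinite_description _ (Hng x n)) end).
  assert (C_gf : forall x, C x -> C (g (f x))).
  { intros x [n [x0 [H0 E0]]]; exists (S n), x0; split; auto; simpl; congruence. }
  assert (h_C : forall x, ~ C x -> g (h x) = x).
  { intros x Cx; unfold h; destruct (excluded_middle_informative (C x)); [contradiction|].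
    destruct (constructive_indefinite_description _ _); assumption. }
  assert (h_nC : forall x, C x -> h x = f x).
  { intros x Cx; unfold h.
    destruct (excluded_middle_informative (C x)); [reflexivity|contradiction]. }
  exists h; split.
  - intros x1 x2 E.
    destruct (classic (C x1)) as [c1|c1], (classic (C x2)) as [c2|c2].
    + rewrite !h_nC in E; auto.
    + exfalso; apply c2; rewrite <- (h_C x2 c2), <- E, h_nC; auto.
    + exfalso; apply c1; rewrite <- (h_C x1 c1), E, h_nC; auto.
    + rewrite <- (h_C x1 c1), <- (h_C x2 c2), E; reflexivity.
  - intros y.
    destruct (classic (C (g y))) as [[n [x0 [H0 E0]]]|c].
    + destruct n as [|m]; [exfalso; apply (H0 y); auto|].
      simpl in E0; apply Hg in E0.
      exists (Nat.iter m (fun z => g (f z)) x0); rewrite h_nC; [auto|exists m, x0; auto].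
    + exists (g y); apply Hg, h_C, c.
Qed.

Lemma infinite_nat_le X : infinite_type X -> le_card nat X.
Proof.
  intros H.
  assert (Hp : forall l : list X, exists x, ~ In x l).
  { intros l; apply NNPP; intros N; apply H; exists l; intros x; apply NNPP; eauto. }
  destruct (choice _ Hp) as [pick Hpick].
  set (g := fix g n := match n with 0 => nil | S n => pick (g n) :: g n end).
  assert (Hg : forall m n, m < n -> In (pick (g m)) (g n)).
  { intros m n; induction n; intros Hl; [lia|].
    simpl; destruct (Nat.eq_dec m n) as [->|Hne]; [left; auto|right; apply IHn; lia]. }
  exists (fun n => pick (g n)); intros m n E.
  destruct (Nat.lt_trichotomy m n) as [l|[e|l]]; auto.
  - exfalso; apply (Hpick (g n)); rewrite <- E; auto.
  - exfalso; apply (Hpick (g m)); rewrite E; auto.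
Qed.

Lemma nat_le_infinite X : le_card nat X -> infinite_type X.
Proof.
  intros [f Hf] [l Hl].
  assert (ND : NoDup (map f (seq 0 (S (length l))))).
  { apply FinFun.Injective_map_NoDup; [exact Hf|apply seq_NoDup]. }
  pose proof (NoDup_incl_length ND (fun x _ => Hl x)) as Hlen.
  rewrite length_map, length_seq in Hlen; lia.
Qed.

Lemma infinite_type_nat : infinite_type nat.
Proof. apply nat_le_infinite, le_card_refl. Qed.

Lemma le_card_infinite X Y : le_card X Y -> infinite_type X -> infinite_type Y.
Proof.
  intros H HX; apply nat_le_infinite; eapply le_card_trans; [apply infinite_nat_le|]; eauto.
Qed.

Lemma le_card_finite X Y : le_card X Y -> finite_type Y -> finite_type X.
Proof. intros H HY; apply NNPP; intros N; eapply le_card_infinite; eauto. Qed.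

Lemma finite_prod X Y : finite_type X -> finite_type Y -> finite_type (X * Y).
Proof. intros [l1 H1] [l2 H2]; exists (list_prod l1 l2); intros [a b]; apply in_prod; auto. Qed.

Lemma infinite_set_type X (S : X -> Prop) : infinite_set S -> infinite_type (sub S).
Proof.
  intros H [l Hl]; apply H; exists (map (@proj1_sig _ _) l).
  intros x hx; apply (in_map (@proj1_sig _ _) _ (exist _ x hx)); auto.
Qed.

Lemma infinite_type_set X (S : X -> Prop) : infinite_type (sub S) -> infinite_set S.
Proof.
  intros H [l Hl]; apply H.
  exists (flat_map (fun x => match excluded_middle_informative (S x) with
                   | left h => exist S x h :: nil | right _ => nil end) l).
  intros [x hx]; apply in_flat_map; exists x; split; auto.
  destruct (excluded_middle_informative (S x)) as [h|h]; [|contradiction].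
  left; apply sub_inj; reflexivity.
Qed.

Lemma infinite_set_mono X (S T : X -> Prop) :
  (forall x, S x -> T x) -> infinite_set S -> infinite_set T.
Proof. intros H HS [l Hl]; apply HS; exists l; auto. Qed.

Lemma countable_infinite_set X (P : X -> Prop) : eq_card (sub P) nat -> infinite_set P.
Proof. intros H; apply infinite_type_set, nat_le_infinite, eq_card_ge, H. Qed.

Lemma infinite_set_countable X (S : X -> Prop) : infinite_set S ->
  exists P : X -> Prop, (forall x, P x -> S x) /\ eq_card (sub P) nat.
Proof.
  intros H; destruct (infinite_nat_le _ (infinite_set_type _ _ H)) as [f Hf].
  exists (fun x => exists n, proj1_sig (f n) = x); split.
  - intros x [n <-]; apply (proj2_sig (f n)).
  - apply eq_card_sym.
    exists (fun n => exist (fun x => exists n, proj1_sig (f n) = x) _ (ex_intro _ n eq_refl)).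
    split.
    + intros m n E; apply Hf, sub_inj; injection E; auto.
    + intros [x [n <-]]; exists n; apply sub_inj; reflexivity.
Qed.

(** * Well-orders *)

Section WellOrderingTheorem.
Import ssreflect ssrbool eqtype boolp wochoice.

Lemma well_ordering_theorem (X : Type) : exists R : X -> X -> Prop, strict_well_order R.
Proof.
have [r r_wo] := well_ordering_principle {classic X}.
have minP (P : X -> Prop) : (exists x, P x) -> exists2 z, P z & forall y, P y -> r z y.
  move=> [x Px]; have [|z [[/asboolP Pz z_lb] _]] := r_wo (fun z => `[< P z >]).
    by exists x; apply/asboolP.
  by exists z => // y Py; apply: z_lb; apply/asboolP.
have r_total x y : r x y \/ r y x.
  have [|z [->|->] z_lb] := minP (fun w => w = x \/ w = y); first by exists x; left.
    by left; apply: z_lb; right.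
  by right; apply: z_lb; left.
have r_anti x y : r x y -> r y x -> x = y.
  move=> rxy ryx; have [|m [_ m_uniq]] := r_wo (fun w => `[< w = x \/ w = y >]).
    by exists x; apply/asboolP; left.
  have r_refl w : r w w by case: (r_total w w).
  have m_eq w : w = x \/ w = y -> r w x -> r w y -> m = w.
    by move=> xyw rwx rwy; apply: m_uniq; split; [apply/asboolP | move=> v /asboolP[->|->]].
  by rewrite -(m_eq x) ?(m_eq y); auto.
have r_trans x y z : r x y -> r y z -> r x z.
  move=> rxy ryz; have [|m [->|[->|->]] m_lb] := minP (fun w => w = x \/ w = y \/ w = z).
  - by exists x; left.
  - by apply: m_lb; auto.
  - by rewrite (r_anti x y rxy); last by apply: m_lb; left.
  - by rewrite -(r_anti y z ryz); last by apply: m_lb; right; left.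
exists (fun x y => r x y /\ x <> y); split; [|split; [|split]].
- by move=> x [].
- move=> x y z [rxy nxy] [ryz nyz]; split; first exact: r_trans _ _ _ rxy ryz.
  by move=> exz; apply: nxy; apply: (r_anti _ _ rxy); rewrite exz.
- move=> x y; case: (Classical_Prop.classic (x = y)) => [|nxy]; first by right; left.
  by case: (r_total x y) => ?; [left | right; right]; split; auto.
- move=> x; apply: NNPP => Nx.
  have [m Nm m_lb] := minP (fun w => ~ Acc _ w) (ex_intro _ x Nx).
  apply: Nm; constructor => y [rym nym]; apply: NNPP => Ny.
  by apply: nym; apply: (r_anti _ _ rym (m_lb y Ny)).
Qed.

End WellOrderingTheorem.

Lemma strict_well_order_wf X (R : X -> X -> Prop) : strict_well_order R -> well_founded R.
Proof. intros [_ [_ [_ W]]]; exact W. Qed.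

Lemma wf_minimal X (R : X -> X -> Prop) : well_founded R -> forall P : X -> Prop,
  (exists x, P x) -> exists x, P x /\ forall y, P y -> ~ R y x.
Proof.
  intros wf P [x Px]; apply NNPP; intros N.
  induction (wf x) as [x _ IH]; apply N; exists x; split; auto.
  intros y Py Ryx; apply (IH y Ryx Py).
Qed.

Lemma wf_fixpoint X T (R : X -> X -> Prop) (wf : well_founded R) (d : T)
  (F : X -> (X -> T) -> T) :
  (forall x g h, (forall y, R y x -> g y = h y) -> F x g = F x h) ->
  exists f : X -> T, forall x, f x = F x f.
Proof.
  intros Fext.
  set (G := fun x (prev : forall y, R y x -> T) =>
    F x (fun y => match excluded_middle_informative (R y x) with
                  | left h => prev y h | right _ => d end)).
  exists (Fix wf (fun _ => T) G); intros x; rewrite Fix_eq.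
  - apply Fext; intros y Ryx.
    destruct (excluded_middle_informative (R y x)); [reflexivity|contradiction].
  - intros z f g Hfg; unfold G; f_equal; extensionality y.
    destruct (excluded_middle_informative (R y z)); auto.
Qed.

Lemma strict_well_order_preimage X Y (f : X -> Y) (R : Y -> Y -> Prop) :
  (forall a b, f a = f b -> a = b) -> strict_well_order R ->
  strict_well_order (fun a b => R (f a) (f b)).
Proof.
  intros Hf [Hirr [Htr [Hto Hwf]]]; split; [|split; [|split]].
  - intros x; apply Hirr.
  - intros x y z; apply Htr.
  - intros x y; destruct (Hto (f x) (f y)) as [h|[h|h]]; auto.
  - apply wf_inverse_image, Hwf.
Qed.

Definition lex {X Y} (R1 : X -> X -> Prop) (R2 : Y -> Y -> Prop) (p q : X * Y) : Prop :=
  R1 (fst p) (fst q) \/ (fst p = fst q /\ R2 (snd p) (snd q)).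

Lemma strict_well_order_lex X Y (R1 : X -> X -> Prop) (R2 : Y -> Y -> Prop) :
  strict_well_order R1 -> strict_well_order R2 -> strict_well_order (lex R1 R2).
Proof.
  intros [I1 [T1 [O1 W1]]] [I2 [T2 [O2 W2]]]; unfold lex; split; [|split; [|split]].
  - intros [x y] [h|[_ h]]; simpl in *; [eapply I1|eapply I2]; eauto.
  - intros [x1 y1] [x2 y2] [x3 y3]; simpl.
    intros [h|[-> h]] [h'|[-> h']]; eauto.
  - intros [x1 y1] [x2 y2]; simpl.
    destruct (O1 x1 x2) as [h|[->|h]]; auto.
    destruct (O2 y1 y2) as [h|[->|h]]; auto.
  - intros [x y]; revert y; induction (W1 x) as [x _ IHx]; intros y.
    induction (W2 y) as [y _ IHy]; constructor; intros [x' y'] [h|[e h]]; simpl in *.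
    + apply IHx; auto.
    + subst; apply IHy; auto.
Qed.

Section WellOrderComparison.
Variables (X Y : Type) (RX : X -> X -> Prop) (RY : Y -> Y -> Prop).
Hypotheses (HX : strict_well_order RX) (HY : strict_well_order RY).

Definition least (U : Y -> Prop) : option Y :=
  match excluded_middle_informative (exists y, U y) with
  | left h => Some (proj1_sig (constructive_indefinite_description _
                 (wf_minimal _ RY (strict_well_order_wf _ _ HY) U h)))
  | right _ => None
  end.

Lemma least_some U y : least U = Some y -> U y /\ forall z, U z -> ~ RY z y.
Proof.
  unfold least; destruct (excluded_middle_informative _) as [h|h]; [|discriminate].
  destruct (constructive_indefinite_description _ _) as [y0 Hy0]; simpl.
  intros E; injection E; intros <-; exact Hy0.
Qed.

Lemma least_none U : least U = None -> forall y, ~ U y.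
Proof.
  unfold least; destruct (excluded_middle_informative _) as [h|h]; [discriminate|eauto].
Qed.

Definition bounded_by (g : X -> option Y) x y :=
  forall x' y', RX x' x -> g x' = Some y' -> RY y' y.

(* One step of the transfinite greedy embedding of [RX] into [RY]. *)
Definition greedy_step x (g : X -> option Y) : option Y :=
  if excluded_middle_informative (forall x', RX x' x -> g x' <> None)
  then least (bounded_by g x) else None.

Lemma greedy_step_ext x g h :
  (forall x', RX x' x -> g x' = h x') -> greedy_step x g = greedy_step x h.
Proof.
  intros E; unfold greedy_step.
  replace (bounded_by g x) with (bounded_by h x).
  - replace (forall x', RX x' x -> g x' <> None) with (forall x', RX x' x -> h x' <> None);
      [reflexivity|].
    apply propositional_extensionality.
    split; intros H x' r e'; apply (H x' r); [rewrite <- E|rewrite E]; auto.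
  - extensionality y; apply propositional_extensionality; unfold bounded_by.
    split; intros H x' y' r e'; apply (H x' y' r); [rewrite <- E|rewrite E]; auto.
Qed.

Section Greedy.
Variable f : X -> option Y.
Hypothesis f_eq : forall x, f x = greedy_step x f.

Lemma greedy_some x y : f x = Some y ->
  (forall x', RX x' x -> f x' <> None) /\ bounded_by f x y /\
  forall z, bounded_by f x z -> ~ RY z y.
Proof.
  rewrite f_eq; unfold greedy_step.
  destruct (excluded_middle_informative _) as [h|h]; [|discriminate].
  intros E; apply least_some in E; tauto.
Qed.

Lemma greedy_mono x y x' : f x = Some y -> RX x' x -> exists y', f x' = Some y' /\ RY y' y.
Proof.
  intros e r; destruct (greedy_some x y e) as [Hdef [Hb _]].
  destruct (f x') as [y'|] eqn:E'; [|exfalso; apply (Hdef x' r); auto].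
  exists y'; split; auto; apply (Hb x' y' r E').
Qed.

Lemma greedy_downward x y z : f x = Some y -> RY z y -> exists x', RX x' x /\ f x' = Some z.
Proof.
  destruct HX as [_ [TX _]], HY as [_ [_ [OY _]]]; revert y z.
  induction (strict_well_order_wf _ _ HX x) as [x _ IH]; intros y z e rz.
  destruct (greedy_some x y e) as [_ [_ Hmin]].
  apply NNPP; intros N; apply (Hmin z); auto; intros x' y' r e'.
  destruct (OY y' z) as [h|[h|h]]; auto.
  - subst; exfalso; eauto.
  - destruct (IH x' r y' z e' h) as [x'' [r'' e'']]; exfalso; eauto.
Qed.

Lemma greedy_inj x1 x2 y : f x1 = Some y -> f x2 = Some y -> x1 = x2.
Proof.
  destruct HX as [_ [_ [OX _]]]; destruct HY as [IY _].
  intros e1 e2; destruct (OX x1 x2) as [h|[h|h]]; auto; exfalso.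
  - destruct (greedy_mono _ _ _ e2 h) as [y' [e' r]]; rewrite e1 in e'.
    injection e'; intros ->; exact (IY _ r).
  - destruct (greedy_mono _ _ _ e1 h) as [y' [e' r]]; rewrite e2 in e'.
    injection e'; intros ->; exact (IY _ r).
Qed.

Lemma greedy_onto m : f m = None -> (forall x, RX x m -> f x <> None) ->
  forall y, exists x, RX x m /\ f x = Some y.
Proof.
  destruct HY as [_ [_ [OY _]]].
  intros em Hdef y; rewrite f_eq in em; unfold greedy_step in em.
  destruct (excluded_middle_informative _) as [_|]; [|contradiction].
  apply NNPP; intros N; apply (least_none _ em y); intros x' y' r e'.
  destruct (OY y' y) as [h|[h|h]]; auto; exfalso.
  - subst; eauto.
  - destruct (greedy_downward x' y' y e' h) as [x'' [r'' e'']].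
    destruct HX as [_ [TX _]]; eauto.
Qed.

End Greedy.

Lemma well_order_compare : le_card X Y \/ exists x0, eq_card (sub (fun x => RX x x0)) Y.
Proof.
  destruct (wf_fixpoint X _ RX (strict_well_order_wf _ _ HX) None greedy_step greedy_step_ext)
    as [f f_eq].
  destruct (classic (exists x, f x = None)) as [Hx|Hdef].
  - right; destruct (wf_minimal X RX (strict_well_order_wf _ _ HX) _ Hx) as [m [em Hm]].
    exists m; apply cantor_bernstein.
    + apply (le_card_rel _ _ (fun s y => f (proj1_sig s) = Some y)).
      * intros [x r]; simpl; destruct (f x) as [y|] eqn:E; [eauto|exfalso; eapply Hm; eauto].
      * intros s s' y e e'; apply sub_inj, (greedy_inj f f_eq _ _ y e e').
    + apply (le_card_rel _ _ (fun y s => f (proj1_sig s) = Some y)).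
      * intros y; destruct (greedy_onto f f_eq m em (fun x r e => Hm x e r) y) as [x [r e]].
        exists (exist _ x r); exact e.
      * intros y y' s e e'; rewrite e in e'; injection e'; auto.
  - left; apply (le_card_rel _ _ (fun x y => f x = Some y)).
    + intros x; destruct (f x) as [y|] eqn:E; [eauto|exfalso; eauto].
    + apply (greedy_inj f f_eq).
Qed.

End WellOrderComparison.

Lemma le_card_total X Y : le_card X Y \/ le_card Y X.
Proof.
  destruct (well_ordering_theorem X) as [RX HX], (well_ordering_theorem Y) as [RY HY].
  destruct (well_order_compare X Y RX RY HX HY) as [H|[x0 H]]; auto.
  right; eapply le_card_trans; [apply eq_card_ge, H|apply le_card_sub].
Qed.

Lemma lt_card_iff X Y : lt_card X Y <-> ~ le_card Y X.
Proof.
  split; [intros [_ H]; auto|]; intros H; split; auto.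
  destruct (le_card_total X Y); auto; contradiction.
Qed.

Lemma not_lt_card X Y : ~ lt_card X Y -> le_card Y X.
Proof. intros H; apply NNPP; intros N; apply H, lt_card_iff, N. Qed.

Lemma lt_card_le X Y : lt_card X Y -> le_card X Y.
Proof. intros [H _]; auto. Qed.

Lemma lt_card_irrefl X : ~ lt_card X X.
Proof. intros [_ H]; apply H, le_card_refl. Qed.

Lemma le_lt_card_trans X Y Z : le_card X Y -> lt_card Y Z -> lt_card X Z.
Proof.
  intros H1 H2; apply lt_card_iff; intros H3; apply lt_card_iff in H2.
  apply H2; eapply le_card_trans; eauto.
Qed.

Lemma lt_le_card_trans X Y Z : lt_card X Y -> le_card Y Z -> lt_card X Z.
Proof.
  intros H1 H2; apply lt_card_iff; intros H3; apply lt_card_iff in H1.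
  apply H1; eapply le_card_trans; eauto.
Qed.

Definition seg {X} (R : X -> X -> Prop) x := sub (fun y => R y x).
Definition cseg {X} (R : X -> X -> Prop) x := sub (fun y => R y x \/ y = x).

(* Restrict a well-order to its least initial segment of full cardinality. *)
Lemma initial_well_order_exists X : exists R : X -> X -> Prop, initial_well_order R.
Proof.
  destruct (well_ordering_theorem X) as [W HW].
  destruct (classic (exists x, le_card X (seg W x))) as [Hx|N].
  - destruct (wf_minimal X W (strict_well_order_wf _ _ HW) _ Hx) as [x0 [H0 Hmin]].
    set (WV := fun a b : seg W x0 => W (proj1_sig a) (proj1_sig b)).
    assert (HWV : strict_well_order WV).
    { apply (strict_well_order_preimage _ _ (@proj1_sig _ _)); [apply sub_inj|exact HW]. }
    destruct (cantor_bernstein _ _ H0 (le_card_sub _ _)) as [phi [phi_inj _]].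
    exists (fun a b => WV (phi a) (phi b)); split.
    + apply strict_well_order_preimage; auto.
    + intros x; apply lt_card_iff; intros Hle.
      apply (Hmin (proj1_sig (phi x))); [|apply (proj2_sig (phi x))].
      eapply le_card_trans; [exact Hle|].
      apply (le_card_rel _ _ (fun y z => proj1_sig (phi (proj1_sig y)) = proj1_sig z)).
      * intros [y r]; exists (exist (fun z => W z (proj1_sig (phi x))) _ r); reflexivity.
      * intros y y' z e e'; apply sub_inj, phi_inj, sub_inj; congruence.
  - exists W; split; auto; intros x; apply lt_card_iff; intros H; apply N; eauto.
Qed.

Lemma lt_card_segment X (R : X -> X -> Prop) Z : initial_well_order R -> lt_card Z X ->
  exists x, eq_card Z (seg R x).
Proof.
  intros [HR _] HZ; destruct (well_ordering_theorem Z) as [W HW].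
  destruct (well_order_compare X Z R W HR HW) as [H|[x0 H]].
  - exfalso; apply lt_card_iff in HZ; auto.
  - exists x0; apply eq_card_sym; auto.
Qed.

(* Hilbert's hotel along a copy [f] of nat inside [Z]. *)
Lemma option_le_infinite Z : infinite_type Z -> le_card (option Z) Z.
Proof.
  intros HZ; destruct (infinite_nat_le _ HZ) as [f Hf].
  apply (le_card_rel _ _ (fun o z' => match o with
    | None => z' = f 0
    | Some z => (exists n, z = f n /\ z' = f (S n)) \/ ((forall n, z <> f n) /\ z' = z) end)).
  - intros [z|]; [|eauto].
    destruct (classic (exists n, z = f n)) as [[n ->]|N]; [eauto|].
    exists z; right; split; auto; intros n e; eauto.
  - assert (fS0 : forall n, f (S n) <> f 0) by (intros n e; apply Hf in e; discriminate).
    intros [z1|] [z2|] z' H1 H2; simpl in *.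
    + destruct H1 as [[n1 [-> ->]]|[N1 ->]], H2 as [[n2 [-> e]]|[N2 e]]; subst; auto.
      * apply Hf in e; injection e; intros ->; reflexivity.
      * exfalso; apply (N2 (S n1)); reflexivity.
      * exfalso; apply (N1 (S n2)); reflexivity.
    + exfalso; destruct H1 as [[n [_ e]]|[N1 e]]; [apply (fS0 n)|apply (N1 0)]; congruence.
    + exfalso; destruct H2 as [[n [_ e]]|[N2 e]]; [apply (fS0 n)|apply (N2 0)]; congruence.
    + reflexivity.
Qed.

Lemma finite_lt_infinite X B : finite_type X -> infinite_type B -> lt_card X B.
Proof. intros HX HB; apply lt_card_iff; intros H; apply HB; eapply le_card_finite; eauto. Qed.

Lemma initial_well_order_unbounded X (R : X -> X -> Prop) :
  initial_well_order R -> infinite_type X -> forall s, exists t, R s t.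
Proof.
  intros [[I [T [O W]]] Hseg] HX s; apply NNPP; intros N.
  assert (Hall : forall t, R t s \/ t = s).
  { intros t; destruct (O t s) as [h|[h|h]]; auto; exfalso; eauto. }
  assert (Hinf : infinite_type (seg R s)).
  { intros [l Hl]; apply HX; exists (s :: map (@proj1_sig _ _) l).
    intros t; destruct (Hall t) as [h| ->]; [right|left; auto].
    apply (in_map (@proj1_sig _ _) _ (exist _ t h)); auto. }
  apply (proj2 (Hseg s)); eapply le_card_trans; [|apply option_le_infinite; auto].
  apply (le_card_rel _ _ (fun t o => match o with
    | Some y => proj1_sig y = t | None => t = s end)).
  - intros t; destruct (Hall t) as [h| ->]; [exists (Some (exist _ t h))|exists None]; reflexivity.
  - intros t t' [y|] <- <-; reflexivity.
Qed.

Lemma cseg_lt_card X (R : X -> X -> Prop) : initial_well_order R -> infinite_type X ->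
  forall s, lt_card (cseg R s) X.
Proof.
  intros HR HX s; destruct (initial_well_order_unbounded X R HR HX s) as [t Rt].
  eapply le_lt_card_trans; [|apply (proj2 HR t)].
  apply le_card_subset; destruct HR as [[_ [T _]] _]; intros y [h| ->]; eauto.
Qed.

(** * Cardinal arithmetic *)

Lemma le_card_prod X Y X' Y' : le_card X X' -> le_card Y Y' -> le_card (X * Y) (X' * Y').
Proof.
  intros [f Hf] [g Hg]; exists (fun p => (f (fst p), g (snd p))).
  intros [a b] [c d] E; injection E; intros; f_equal; auto.
Qed.

Lemma square_le_eq_card U V : eq_card U V -> le_card (U * U) U -> le_card (V * V) V.
Proof.
  intros E H; eapply le_card_trans; [apply le_card_prod; apply eq_card_ge, E|].
  eapply le_card_trans; [exact H|apply eq_card_le, E].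
Qed.

Section SquareOrder.
Context {Y : Type} (R : Y -> Y -> Prop).
Hypothesis HR : strict_well_order R.

Definition maxR a b := if excluded_middle_informative (R a b) then b else a.

(* Goedel's well-order of pairs. *)
Definition square_order (p q : Y * Y) : Prop :=
  lex R (lex R R) (maxR (fst p) (snd p), p) (maxR (fst q) (snd q), q).

Lemma square_order_wo : strict_well_order square_order.
Proof.
  apply (strict_well_order_preimage _ _ (fun p => (maxR (fst p) (snd p), p))).
  - intros a b E; injection E; auto.
  - apply strict_well_order_lex; auto; apply strict_well_order_lex; auto.
Qed.

Lemma maxR_ge a b : (R a (maxR a b) \/ a = maxR a b) /\ (R b (maxR a b) \/ b = maxR a b).
Proof.
  destruct HR as [_ [_ [O _]]]; unfold maxR.
  destruct (excluded_middle_informative (R a b)); auto.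
  destruct (O a b) as [h|[h|h]]; auto; contradiction.
Qed.

Lemma square_order_below p q : square_order q p ->
  let m := maxR (fst p) (snd p) in (R (fst q) m \/ fst q = m) /\ (R (snd q) m \/ snd q = m).
Proof.
  destruct HR as [_ [T _]]; intros Hq m.
  assert (Hm : R (maxR (fst q) (snd q)) m \/ maxR (fst q) (snd q) = m).
  { destruct Hq as [h|[h _]]; auto. }
  assert (le_trans : forall a b c, R a b \/ a = b -> R b c \/ b = c -> R a c \/ a = c).
  { intros a b c [h| ->] [h'| ->]; eauto. }
  destruct (maxR_ge (fst q) (snd q)); split; eauto.
Qed.

End SquareOrder.

(* If the pairs of [Y] were too many, some proper Goedel segment, contained in the square of
   a smaller closed segment of [Y], would already have the size of [Y]. *)
Lemma square_le_of_smaller Y (R : Y -> Y -> Prop) : initial_well_order R -> infinite_type Y ->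
  (forall Z, lt_card Z Y -> infinite_type Z -> le_card (Z * Z) Z) -> le_card (Y * Y) Y.
Proof.
  intros HR HY Hsmall.
  destruct (well_order_compare (Y * Y) Y _ R (square_order_wo R (proj1 HR)) (proj1 HR))
    as [h|[p Hp]]; auto; exfalso.
  set (m := maxR R (fst p) (snd p)).
  assert (Hle : le_card Y (cseg R m * cseg R m)).
  { eapply le_card_trans; [apply eq_card_ge, Hp|].
    apply (le_card_rel _ _ (fun q c => proj1_sig q = (proj1_sig (fst c), proj1_sig (snd c)))).
    - intros [[a b] hq]; destruct (square_order_below R (proj1 HR) p (a, b) hq) as [ha hb].
      exists (exist _ a ha, exist _ b hb); reflexivity.
    - intros q q' c e e'; apply sub_inj; congruence. }
  pose proof (cseg_lt_card Y R HR HY m) as Hlt.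
  destruct (classic (finite_type (cseg R m))) as [Hf|Hi].
  - apply HY; eapply le_card_finite; [exact Hle|apply finite_prod; auto].
  - apply (proj2 Hlt); eapply le_card_trans; [exact Hle|apply Hsmall; auto].
Qed.

Lemma infinite_square_le X : infinite_type X -> le_card (X * X) X.
Proof.
  intros HX; destruct (initial_well_order_exists X) as [R HR].
  assert (Hseg : forall m, infinite_type (seg R m) -> le_card (seg R m * seg R m) (seg R m)).
  { pose proof HR as [[_ [T [O W]]] _].
    intros m; induction (W m) as [m _ IH]; intros Hinf.
    destruct (initial_well_order_exists (seg R m)) as [Rm HRm].
    apply (square_le_of_smaller _ Rm HRm Hinf); intros Z HZ HZinf.
    destruct (lt_card_segment X R Z HR (lt_le_card_trans _ _ _ HZ (le_card_sub _ _)))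
      as [m' Em'].
    assert (Rm' : R m' m).
    { destruct (O m' m) as [h|[<-|h]]; auto; exfalso; apply (proj2 HZ).
      - apply eq_card_ge, Em'.
      - eapply le_card_trans; [|apply eq_card_ge, Em']; apply le_card_subset; eauto. }
    apply (square_le_eq_card (seg R m')); [apply eq_card_sym; auto|].
    apply IH; auto; eapply le_card_infinite; [apply eq_card_le, Em'|auto]. }
  apply (square_le_of_smaller X R HR HX); intros Z HZ HZinf.
  destruct (lt_card_segment X R Z HR HZ) as [m Em].
  apply (square_le_eq_card (seg R m)); [apply eq_card_sym; auto|].
  apply Hseg; eapply le_card_infinite; [apply eq_card_le, Em|auto].
Qed.

Lemma le_card_prod_infinite M X Y :
  infinite_type M -> le_card X M -> le_card Y M -> le_card (X * Y) M.
Proof.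
  intros HM H1 H2; eapply le_card_trans; [apply le_card_prod; eauto|apply infinite_square_le; auto].
Qed.

Lemma lt_card_common_bound B X Y : lt_card X B -> lt_card Y B ->
  exists M, le_card X M /\ le_card Y M /\ lt_card M B.
Proof.
  intros HX HY; destruct (le_card_total X Y); [exists Y|exists X];
    (split; [|split]); auto; apply le_card_refl.
Qed.

Lemma lt_card_prod B X Y : infinite_type B -> lt_card X B -> lt_card Y B -> lt_card (X * Y) B.
Proof.
  intros HB HX HY; destruct (lt_card_common_bound _ _ _ HX HY) as [M [HXM [HYM HMB]]].
  destruct (classic (finite_type M)) as [Hf|Hi].
  - apply finite_lt_infinite; auto; apply finite_prod; eapply le_card_finite; eauto.
  - eapply le_lt_card_trans; [apply le_card_prod_infinite; eauto|auto].
Qed.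

Lemma le_card_union J K V (X : J -> V -> Prop) :
  (forall j, le_card (sub (X j)) K) -> le_card (sub (fun v => exists j, X j v)) (J * K).
Proof.
  intros HK.
  assert (He : forall j, {e : sub (X j) -> K | forall a b, e a = e b -> a = b}).
  { intros j; apply constructive_indefinite_description, HK. }
  apply (le_card_rel _ _ (fun v p => exists h : X (fst p) (proj1_sig v),
                                       proj1_sig (He (fst p)) (exist _ _ h) = snd p)).
  - intros [v [j h]]; exists (j, proj1_sig (He j) (exist _ v h)); exists h; reflexivity.
  - intros v v' [j k] [h e] [h' e']; simpl in *; apply sub_inj.
    rewrite <- e' in e; apply (proj2_sig (He j)) in e; injection e; auto.
Qed.

Lemma le_card_or V M (P Q : V -> Prop) : le_card (sub P) M -> le_card (sub Q) M ->
  le_card (sub (fun v => P v \/ Q v)) (bool * M).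
Proof.
  intros HP HQ.
  eapply le_card_trans; [|apply (le_card_union bool M V (fun b => if b then P else Q))].
  - apply le_card_subset; intros v [h|h]; [exists true|exists false]; auto.
  - intros [|]; auto.
Qed.

Lemma lt_card_or B V (P Q : V -> Prop) : infinite_type B ->
  lt_card (sub P) B -> lt_card (sub Q) B -> lt_card (sub (fun v => P v \/ Q v)) B.
Proof.
  intros HB HP HQ; destruct (lt_card_common_bound _ _ _ HP HQ) as [M [HPM [HQM HMB]]].
  eapply le_lt_card_trans; [apply (le_card_or V M P Q HPM HQM)|].
  apply lt_card_prod; auto.
  apply finite_lt_infinite; auto; exists (true :: false :: nil); intros [|]; simpl; auto.
Qed.

Lemma large_fiber W J T B (h : W -> J) : infinite_type B -> lt_card J B -> lt_card T B ->
  ~ lt_card W B -> exists j, le_card T (sub (fun w => h w = j)).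
Proof.
  intros HB HJ HT HW; apply NNPP; intros N; apply HW.
  eapply le_lt_card_trans; [|apply (lt_card_prod B J T HB HJ HT)].
  eapply le_card_trans; [|apply (le_card_union J T W (fun j w => h w = j))].
  - apply (le_card_rel _ _ (fun w v => proj1_sig v = w)).
    + intros w; exists (exist _ w (ex_intro _ (h w) eq_refl)); reflexivity.
    + intros w w' v <- <-; reflexivity.
  - intros j; apply lt_card_le, lt_card_iff; intros Hj; apply N; eauto.
Qed.

(** * Cofinality *)

Definition cofinal_min {B} (R : B -> B -> Prop) (S0 : B -> Prop) :=
  initial_well_order R /\ cofinal_in R S0 /\
  forall S, cofinal_in R S -> le_card (sub S0) (sub S).

Lemma cofinal_min_exists B : exists R S0, @cofinal_min B R S0.
Proof.
  destruct (initial_well_order_exists B) as [R HR]; exists R.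
  destruct (classic (exists x S, cofinal_in R S /\ le_card (sub S) (seg R x))) as [Hx|N].
  - pose proof HR as [[_ [T [O W]]] _].
    destruct (wf_minimal B R W _ Hx) as [x0 [[S0 [C0 L0]] Hmin]].
    exists S0; split; [exact HR|split; [exact C0|]].
    intros S CS; destruct (classic (lt_card (sub S) B)) as [Hl|Hn].
    + destruct (lt_card_segment B R _ HR Hl) as [x Ex].
      assert (Hx0 : R x0 x \/ x0 = x).
      { destruct (O x0 x) as [h|[h|h]]; auto; exfalso; apply (Hmin x); auto.
        exists S; split; auto; apply eq_card_le; auto. }
      eapply le_card_trans; [exact L0|]; eapply le_card_trans; [|apply eq_card_ge, Ex].
      apply le_card_subset; intros y hy; destruct Hx0 as [h| <-]; eauto.
    + eapply le_card_trans; [apply le_card_sub|apply not_lt_card, Hn].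
  - exists (fun _ => True); split; [auto|split].
    + intros x; exists x; auto.
    + intros S CS; eapply le_card_trans; [apply le_card_sub|].
      apply not_lt_card; intros Hl; destruct (lt_card_segment B R _ HR Hl) as [x Ex].
      apply N; exists x, S; split; auto; apply eq_card_le; auto.
Qed.

Lemma cofinal_min_is_cf B R S0 : @cofinal_min B R S0 -> is_cf B (sub S0).
Proof.
  intros [HR [C M]]; exists R; split; auto; split; auto.
  exists S0; split; auto; apply eq_card_refl.
Qed.

(* Fewer than cf(B) initial segments are all contained in a single one. *)
Lemma lt_card_union_cf B R S0 J (X : J -> B -> Prop) : @cofinal_min B R S0 -> infinite_type B ->
  lt_card J (sub S0) -> (forall j, lt_card (sub (X j)) B) ->
  lt_card (sub (fun b => exists j, X j b)) B.
Proof.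
  intros [HR [_ M0]] HB HJ HX.
  destruct (choice _ (fun j => lt_card_segment B R _ HR (HX j))) as [y Hy].
  assert (Hbound : exists x, forall j, R (y j) x).
  { apply NNPP; intros N; apply (proj2 HJ).
    eapply le_card_trans; [apply (M0 (fun b => exists j, y j = b))|].
    - intros x; apply NNPP; intros N2; apply N; exists x; intros j.
      destruct HR as [[_ [_ [O _]]] _].
      destruct (O (y j) x) as [h|[h|h]]; auto; exfalso; apply N2; eauto.
    - apply (le_card_rel _ _ (fun s j => y j = proj1_sig s)).
      + intros [b [j e]]; exists j; auto.
      + intros s s' j e e'; apply sub_inj; congruence. }
  destruct Hbound as [x Hx].
  eapply le_lt_card_trans; [apply (le_card_union J (seg R x))|].
  - intros j; eapply le_card_trans; [apply eq_card_le, Hy|].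
    apply le_card_subset; destruct HR as [[_ [T _]] _]; intros b hb; eauto.
  - apply lt_card_prod; auto; [eapply lt_le_card_trans; [exact HJ|apply le_card_sub]|apply HR].
Qed.

Lemma list_max X (R : X -> X -> Prop) :
  (forall x y z, R x y -> R y z -> R x z) -> (forall x y, R x y \/ x = y \/ R y x) ->
  forall (l : list X) a, exists m, In m (a :: l) /\ forall y, In y (a :: l) -> R y m \/ y = m.
Proof.
  intros T O l; induction l as [|b l IH]; intros a.
  - exists a; split; [left; auto|]; intros y [<-|[]]; auto.
  - destruct (IH b) as [m [Hm Hall]]; destruct (O a m) as [h|[h|h]].
    + exists m; split; [right; auto|]; intros y [<-|hy]; auto.
    + subst; exists m; split; [left; auto|]; intros y [<-|hy]; auto.
    + exists a; split; [left; auto|]; intros y [<-|hy]; auto.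
      destruct (Hall y hy) as [h'| ->]; eauto.
Qed.

Lemma cofinal_infinite M (R : M -> M -> Prop) S : initial_well_order R -> infinite_type M ->
  cofinal_in R S -> infinite_set S.
Proof.
  intros HR HM CS [l Hl]; pose proof HR as [[I [T [O _]]] _].
  destruct (infinite_nat_le _ HM) as [f _]; destruct (CS (f 0)) as [a [Sa _]].
  destruct (list_max M R T O l a) as [m [_ Hall]].
  destruct (initial_well_order_unbounded M R HR HM m) as [t Rt].
  destruct (CS t) as [y [Sy Hy]].
  destruct (Hall y (or_intror (Hl y Sy))) as [h| ->], Hy as [h'| ->]; apply (I m); eauto.
Qed.

Lemma unbounded_countable_cf M (R : M -> M -> Prop) P : initial_well_order R -> infinite_type M ->
  eq_card (sub P) nat -> cofinal_in R P -> is_cf M nat.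
Proof.
  intros HR HM EP CP; exists R; split; auto; split.
  - exists P; auto.
  - intros S CS; apply infinite_nat_le, infinite_set_type; eapply cofinal_infinite; eauto.
Qed.

(* The successor of an infinite cardinal is regular, so its cofinality exceeds its predecessor. *)
Lemma successor_cf_gt B R S0 M : @cofinal_min B R S0 -> infinite_type B -> infinite_type M ->
  lt_card M B -> (forall Z, lt_card M Z -> le_card B Z) -> lt_card M (sub S0).
Proof.
  intros [HR [C0 _]] HB HM HMB Hsucc; apply lt_card_iff; intros HS0; apply (proj2 HMB).
  eapply le_card_trans; [|apply (le_card_prod_infinite M (sub S0) M HM HS0 (le_card_refl M))].
  eapply le_card_trans; [|apply (le_card_union (sub S0) M B
                                   (fun s b => R b (proj1_sig s) \/ b = proj1_sig s))].
  - apply (le_card_rel _ _ (fun b v => proj1_sig v = b)).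
    + intros b; destruct (C0 b) as [y [Sy Hy]].
      assert (Hb : exists s : sub S0, R b (proj1_sig s) \/ b = proj1_sig s)
        by (exists (exist _ y Sy); auto).
      exists (exist _ b Hb); reflexivity.
    + intros b b' v <- <-; reflexivity.
  - intros s; apply not_lt_card; intros Hlt.
    apply (proj2 (cseg_lt_card B R HR HB (proj1_sig s))), Hsucc, Hlt.
Qed.

(** * Countable subsets under GCH *)

Lemma gch_pow_le X Z : GCH -> infinite_type X -> lt_card X Z -> le_card (X -> Prop) Z.
Proof.
  intros G HX HZ; destruct (le_card_total (X -> Prop) Z) as [h|h]; auto.
  destruct (G X Z HX (lt_card_le _ _ HZ) h) as [E|E].
  - exfalso; apply (proj2 HZ), eq_card_le, E.
  - apply eq_card_ge, E.
Qed.

Definition countable_subsets X := sub (fun P : X -> Prop => eq_card (sub P) nat).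

Lemma countable_subsets_empty X : finite_type X -> countable_subsets X -> False.
Proof.
  intros [l Hl] [P HP]; apply (countable_infinite_set _ _ HP); exists l; auto.
Qed.

Lemma eq_card_restrict X (U P : X -> Prop) :
  (forall x, P x -> U x) -> eq_card (sub (fun s : sub U => P (proj1_sig s))) (sub P).
Proof.
  intros PU; apply cantor_bernstein.
  - apply (le_card_rel _ _ (fun s p => proj1_sig (proj1_sig s) = proj1_sig p)).
    + intros [s Ps]; exists (exist _ _ Ps); reflexivity.
    + intros s s' p e e'; apply sub_inj, sub_inj; exact (eq_trans e (eq_sym e')).
  - apply (le_card_rel _ _ (fun p s => proj1_sig (proj1_sig s) = proj1_sig p)).
    + intros [x Px]; exists (exist (fun s : sub U => P (proj1_sig s)) (exist _ x (PU x Px)) Px).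
      reflexivity.
    + intros p p' s e e'; apply sub_inj; exact (eq_trans (eq_sym e) e').
Qed.

Lemma countable_subsets_within X (U : X -> Prop) :
  le_card (sub (fun P : X -> Prop => eq_card (sub P) nat /\ forall x, P x -> U x))
          (countable_subsets (sub U)).
Proof.
  apply (le_card_rel _ _
           (fun P Q => forall s : sub U, proj1_sig Q s <-> proj1_sig P (proj1_sig s))).
  - intros [P [HP PU]].
    exists (exist _ (fun s : sub U => P (proj1_sig s))
              (eq_card_trans _ _ _ (eq_card_restrict X U P PU) HP)); simpl; tauto.
  - intros [P [HP PU]] [P' [HP' PU']] Q e e'; apply sub_inj; simpl in *.
    extensionality x; apply propositional_extensionality; split; intros h.
    + apply (e' (exist _ x (PU x h))), (e (exist _ x (PU x h))), h.
    + apply (e (exist _ x (PU' x h))), (e' (exist _ x (PU' x h))), h.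
Qed.

Lemma countable_subsets_le X (R : X -> X -> Prop) : GCH -> infinite_type X ->
  initial_well_order R -> (forall P, eq_card (sub P) nat -> exists x, forall y, P y -> R y x) ->
  le_card (countable_subsets X) X.
Proof.
  intros G HX HR Hbounded.
  eapply le_card_trans; [|apply (infinite_square_le X HX)].
  eapply le_card_trans; [|apply (le_card_union X X (X -> Prop)
                                   (fun x Q => eq_card (sub Q) nat /\ forall y, Q y -> R y x))].
  - apply (le_card_rel _ _ (fun c v => proj1_sig v = proj1_sig c)).
    + intros [P HP]; destruct (Hbounded P HP) as [x Hx].
      exists (exist (fun Q => exists x, eq_card (sub Q) nat /\ forall y, Q y -> R y x) P
                (ex_intro _ x (conj HP Hx))); reflexivity.
    + intros c c' v e e'; apply sub_inj; exact (eq_trans (eq_sym e) e').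
  - intros x; eapply le_card_trans; [apply (countable_subsets_within X (fun y => R y x))|].
    destruct (classic (finite_type (seg R x))) as [Hf|Hi].
    + exists (fun c => False_rect X (countable_subsets_empty _ Hf c)).
      intros c; destruct (countable_subsets_empty _ Hf c).
    + eapply le_card_trans; [apply le_card_sub|apply (gch_pow_le _ X G Hi (proj2 HR x))].
Qed.

Lemma countable_subsets_le_or_cf_omega M : GCH -> infinite_type M ->
  le_card (countable_subsets M) M \/ is_cf M nat.
Proof.
  intros G HM; destruct (initial_well_order_exists M) as [R HR].
  destruct (classic (forall P, eq_card (sub P) nat -> exists x, forall y, P y -> R y x))
    as [H|H]; [left; eapply countable_subsets_le; eauto|right].
  apply not_all_ex_not in H as [P H]; apply imply_to_and in H as [EP NB].
  apply (unbounded_countable_cf M R P HR HM EP); intros x; apply NNPP; intros N.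
  apply NB; exists x; intros y Py; destruct HR as [[_ [_ [O _]]] _].
  destruct (O y x) as [h|[h|h]]; auto; exfalso; apply N; eauto.
Qed.

(* Under GCH, [M^omega <= M^+], with [M^omega = M] unless cf(M) = omega. *)
Lemma countable_subsets_lt M K : GCH -> lt_card M K ->
  (is_cf M nat -> (forall Z, lt_card M Z -> le_card K Z) -> False) ->
  lt_card (countable_subsets M) K.
Proof.
  intros G HMK Hexcl; apply lt_card_iff; intros HK; apply (proj2 HMK).
  destruct (classic (finite_type M)) as [Hf|Hinf].
  - destruct HK as [g _]; exists (fun k => False_rect M (countable_subsets_empty _ Hf (g k))).
    intros k; destruct (countable_subsets_empty _ Hf (g k)).
  - destruct (countable_subsets_le_or_cf_omega M G Hinf) as [h|h].
    + eapply le_card_trans; eauto.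
    + exfalso; apply (Hexcl h); intros Z HZ; eapply le_card_trans; [exact HK|].
      eapply le_card_trans; [apply le_card_sub|apply gch_pow_le; auto].
Qed.

(** * The construction *)

Section Construction.
Hypothesis gch : GCH.
Variables (A B : Type) (E : A -> B -> Prop).
Hypotheses (HA : infinite_type A) (HB : infinite_type B) (HAB : lt_card A B).
Hypothesis Hbip : bip_graph E.
Variables (R : B -> B -> Prop) (S0 : B -> Prop).
Hypothesis HS0 : cofinal_min R S0.
Hypothesis cf_not_succ_omega : forall M, is_cf M nat -> lt_card M (sub S0) ->
  (forall Z, lt_card M Z -> le_card (sub S0) Z) -> False.

(* For countable [C], [(C, heavy C)] is the largest (aleph_0, nu)-subgraph with left side [C]. *)
Definition heavy (C : A -> Prop) (b : B) := infinite_set (fun a => C a /\ E a b).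

Hypothesis heavy_small : forall C, eq_card (sub C) nat -> lt_card (sub (heavy C)) B.

Lemma countable_subsets_A_lt : lt_card (countable_subsets A) B.
Proof.
  apply countable_subsets_lt; auto; intros cfA succ.
  apply (cf_not_succ_omega A cfA).
  - apply (successor_cf_gt B R S0 A HS0 HB HA HAB succ).
  - intros Z HZ; eapply le_card_trans; [apply le_card_sub|apply succ, HZ].
Qed.

Definition block := ((A -> Prop) * (B -> Prop))%type.
Definition empty_block : block := (fun _ => False, fun _ => False).

Section Recursion.
Variable RI : sub S0 -> sub S0 -> Prop.
Hypothesis HRI : initial_well_order RI.

(* Conditions on the [i]-th block [p] given the earlier blocks [g j]; the lower bound on the
   size of [snd p] makes the sizes cofinal in |B|. *)
Definition admissible (i : sub S0) (g : sub S0 -> block) (p : block) : Prop :=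
  eq_card (sub (fst p)) nat /\ (forall b, snd p b -> heavy (fst p) b) /\
  lt_card (sub (snd p)) B /\ le_card (seg R (proj1_sig i)) (sub (snd p)) /\
  forall j, RI j i ->
    (forall a, ~ (fst (g j) a /\ fst p a)) /\ (forall b, ~ (snd (g j) b /\ snd p b)).

Section Step.
Variables (i : sub S0) (g : sub S0 -> block).
Hypothesis g_below : forall j, RI j i ->
  eq_card (sub (fst (g j))) nat /\ lt_card (sub (snd (g j))) B.

Definition used_A a := exists j, RI j i /\ fst (g j) a.
Definition used_B b := exists j, RI j i /\ snd (g j) b.

Lemma used_B_small : lt_card (sub used_B) B.
Proof.
  eapply le_lt_card_trans; [|apply (lt_card_union_cf B R S0 (seg RI i)
    (fun j => snd (g (proj1_sig j))) HS0 HB (proj2 HRI i)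
    (fun j => proj2 (g_below _ (proj2_sig j))))].
  apply le_card_subset; intros b [j [r h]]; exists (exist _ j r); auto.
Qed.

Lemma used_A_le : le_card (sub used_A) (seg RI i * nat).
Proof.
  eapply le_card_trans; [|apply (le_card_union (seg RI i) nat A (fun j => fst (g (proj1_sig j))))].
  - apply le_card_subset; intros a [j [r h]]; exists (exist _ j r); auto.
  - intros j; apply eq_card_le, (g_below _ (proj2_sig j)).
Qed.

Lemma heavy_used_small_countable_cf : le_card (sub S0) nat -> lt_card (sub (heavy used_A)) B.
Proof.
  intros HS0nat.
  destruct (infinite_set_countable A (fun _ => True)) as [N [_ HN]].
  { intros [l Hl]; apply HA; exists l; auto. }
  assert (HU : eq_card (sub (fun a => used_A a \/ N a)) nat).
  { apply cantor_bernstein.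
    - eapply le_card_trans; [apply le_card_or|].
      + eapply le_card_trans; [apply used_A_le|].
        apply le_card_prod_infinite; [apply infinite_type_nat| |apply le_card_refl].
        eapply le_card_trans; [apply le_card_sub|exact HS0nat].
      + apply eq_card_le, HN.
      + apply le_card_prod_infinite; [apply infinite_type_nat| |apply le_card_refl].
        exists (fun b : bool => if b then 1 else 0); intros [|] [|]; congruence.
    - eapply le_card_trans; [apply eq_card_ge, HN|]; apply le_card_subset; auto. }
  eapply le_lt_card_trans; [|apply (heavy_small _ HU)].
  apply le_card_subset; intros b; apply infinite_set_mono; intros a [h1 h2]; auto.
Qed.

Lemma heavy_used_small_uncountable_cf :
  ~ le_card (sub S0) nat -> lt_card (sub (heavy used_A)) B.
Proof.
  intros Hunc.
  assert (HS0inf : infinite_type (sub S0)).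
  { apply nat_le_infinite; destruct (le_card_total nat (sub S0)); tauto. }
  assert (HU : lt_card (sub used_A) (sub S0)).
  { eapply le_lt_card_trans; [apply used_A_le|].
    apply lt_card_prod; auto; [apply HRI|apply lt_card_iff; auto]. }
  set (J := sub (fun P : A -> Prop => eq_card (sub P) nat /\ forall a, P a -> used_A a)).
  assert (HJ : lt_card J (sub S0)).
  { eapply le_lt_card_trans; [apply countable_subsets_within|].
    apply countable_subsets_lt; auto; intros cfU succ; apply (cf_not_succ_omega _ cfU HU succ). }
  eapply le_lt_card_trans; [|apply (lt_card_union_cf B R S0 J (fun c => heavy (proj1_sig c))
                                    HS0 HB HJ (fun c => heavy_small _ (proj1 (proj2_sig c))))].
  apply le_card_subset; intros b Hb.
  destruct (infinite_set_countable _ _ Hb) as [P [HPsub HP]].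
  exists (exist _ P (conj HP (fun a h => proj1 (HPsub a h)))).
  eapply infinite_set_mono; [|apply (countable_infinite_set _ _ HP)].
  intros a h; split; auto; apply (HPsub a h).
Qed.

Lemma heavy_used_small : lt_card (sub (heavy used_A)) B.
Proof.
  destruct (classic (le_card (sub S0) nat));
    [apply heavy_used_small_countable_cf|apply heavy_used_small_uncountable_cf]; auto.
Qed.

Definition fresh b := ~ used_B b /\ ~ heavy used_A b.

Lemma fresh_large : ~ lt_card (sub fresh) B.
Proof.
  intros Hf; apply (lt_card_irrefl B).
  assert (Hsmall : lt_card (sub (fun b => (used_B b \/ heavy used_A b) \/ fresh b)) B).
  { apply lt_card_or; auto; apply lt_card_or; auto; [apply used_B_small|apply heavy_used_small]. }
  eapply le_lt_card_trans; [|exact Hsmall].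
  apply (le_card_rel _ _ (fun b v => proj1_sig v = b)); [|intros b b' v <- <-; reflexivity].
  intros b; assert (Hb : (used_B b \/ heavy used_A b) \/ fresh b).
  { unfold fresh; destruct (classic (used_B b)), (classic (heavy used_A b)); tauto. }
  exists (exist _ b Hb); reflexivity.
Qed.

Lemma fresh_neighbours b : fresh b ->
  exists N, eq_card (sub N) nat /\ forall a, N a -> E a b /\ ~ used_A a.
Proof.
  intros [_ Hlight].
  destruct (infinite_set_countable A (fun a => E a b /\ ~ used_A a)) as [N [HN1 HN2]]; eauto.
  intros [l Hl]; apply Hlight; intros [l' Hl']; apply (Hbip b); exists (l ++ l').
  intros a Ea; apply in_or_app; destruct (classic (used_A a)); auto.
Qed.

(* Pigeonhole: fewer than |B| countable sets serve as fresh neighbourhoods of |B| many vertices. *)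
Lemma admissible_exists : exists p, admissible i g p.
Proof.
  set (J := sub (fun P : A -> Prop => eq_card (sub P) nat /\ forall a, P a -> ~ used_A a)).
  assert (HJ : lt_card J B).
  { eapply le_lt_card_trans; [|apply countable_subsets_A_lt]; apply le_card_subset; tauto. }
  destruct (choice (fun (w : sub fresh) (c : J) => forall a, proj1_sig c a -> E a (proj1_sig w)))
    as [N HN].
  { intros [b Hb]; destruct (fresh_neighbours b Hb) as [P [HP HPb]].
    exists (exist _ P (conj HP (fun a h => proj2 (HPb a h)))); intros a h; apply (HPb a h). }
  destruct (large_fiber (sub fresh) J _ B N HB HJ (proj2 (proj1 HS0) (proj1_sig i)) fresh_large)
    as [c Hc].
  set (D := fun b => exists h : fresh b, N (exist _ b h) = c).
  assert (D_heavy : forall b, D b -> heavy (proj1_sig c) b).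
  { intros b [h e].
    eapply infinite_set_mono; [|apply (countable_infinite_set _ _ (proj1 (proj2_sig c)))].
    intros a ha; split; auto; rewrite <- e in ha; apply (HN _ a ha). }
  exists (proj1_sig c, D); split; [|split; [|split; [|split]]]; simpl.
  - apply (proj2_sig c).
  - exact D_heavy.
  - eapply le_lt_card_trans; [|apply (heavy_small _ (proj1 (proj2_sig c)))].
    apply le_card_subset, D_heavy.
  - eapply le_card_trans; [exact Hc|].
    apply (le_card_rel _ _ (fun w v => proj1_sig (proj1_sig w) = proj1_sig v)).
    + intros [[b h] e]; exists (exist D b (ex_intro _ h e)); reflexivity.
    + intros w w' v e e'; apply sub_inj, sub_inj; exact (eq_trans e (eq_sym e')).
  - intros j r; split.
    + intros a [ha hc]; apply (proj2 (proj2_sig c) a hc); exists j; auto.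
    + intros b [hb [[hB _] _]]; apply hB; exists j; auto.
Qed.

End Step.

Lemma admissible_ext i g h :
  (forall j, RI j i -> g j = h j) -> admissible i g = admissible i h.
Proof.
  intros Egh; extensionality p; apply propositional_extensionality; unfold admissible.
  split; intros [H1 [H2 [H3 [H4 Hdisj]]]]; refine (conj H1 (conj H2 (conj H3 (conj H4 _))));
    intros j r; [rewrite <- (Egh j r)|rewrite (Egh j r)]; apply Hdisj, r.
Qed.

Lemma admissible_family : exists f : sub S0 -> block, forall i, admissible i f (f i).
Proof.
  pose proof (strict_well_order_wf _ _ (proj1 HRI)) as wf.
  destruct (wf_fixpoint _ _ RI wf empty_block
              (fun i g => epsilon (inhabits empty_block) (admissible i g))) as [f Hf].
  { intros i g h Egh; rewrite (admissible_ext i g h Egh); reflexivity. }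
  exists f; intros i; induction (wf i) as [i _ IH]; rewrite (Hf i).
  apply epsilon_spec, admissible_exists; intros j r.
  destruct (IH j r) as [HC [_ [HD _]]]; auto.
Qed.

End Recursion.

Lemma disjoint_family_exists : exists (I : Type) (C : I -> A -> Prop) (D : I -> B -> Prop),
  is_cf B I /\
  (forall i, aleph0_subgraph E (C i) (D i) (sub (D i))) /\
  (forall i j, i <> j -> (forall a, ~ (C i a /\ C j a)) /\ (forall b, ~ (D i b /\ D j b))) /\
  (forall i, lt_card (sub (D i)) B) /\
  (forall Z : Type, lt_card Z B -> exists i, le_card Z (sub (D i))).
Proof.
  destruct (initial_well_order_exists (sub S0)) as [RI HRI].
  destruct (admissible_family RI HRI) as [f Hf].
  pose proof HS0 as [HR [C0 _]].
  exists (sub S0), (fun i => fst (f i)), (fun i => snd (f i)).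
  split; [apply (cofinal_min_is_cf B R S0 HS0)|split; [|split; [|split]]].
  - intros i; destruct (Hf i) as [HC [Hheavy _]]; split; [auto|split; [apply eq_card_refl|auto]].
  - intros i j nij; destruct HRI as [[_ [_ [O _]]] _].
    destruct (O i j) as [r|[e|r]]; [|contradiction|].
    + destruct (Hf j) as [_ [_ [_ [_ Hdisj]]]]; destruct (Hdisj i r); auto.
    + destruct (Hf i) as [_ [_ [_ [_ Hdisj]]]]; destruct (Hdisj j r) as [e1 e2].
      split; intros x [h1 h2]; [apply (e1 x)|apply (e2 x)]; auto.
  - intros i; destruct (Hf i) as [_ [_ [HD _]]]; auto.
  - intros Z HZ; destruct (lt_card_segment B R Z HR HZ) as [x Ex].
    destruct (C0 x) as [y [Sy Hy]]; exists (exist _ y Sy).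
    destruct (Hf (exist _ y Sy)) as [_ [_ [_ [Hseg _]]]].
    eapply le_card_trans; [apply eq_card_le, Ex|]; eapply le_card_trans; [|exact Hseg].
    apply le_card_subset; destruct HR as [[_ [T _]] _]; intros z hz.
    destruct Hy as [h| <-]; eauto.
Qed.

End Construction.

Theorem lemma4p6 :
  GCH ->
  forall (A B : Type) (E : A -> B -> Prop),
    infinite_type A -> infinite_type B -> lt_card A B ->
    (* cf(kappa) is not of the form mu^+ with cf(mu) = omega *)
    ~ (exists (CF M : Type), is_cf B CF /\ is_succ_card M CF /\ is_cf M nat) ->
    bip_graph E ->
    (exists (C : A -> Prop) (D : B -> Prop), aleph0_subgraph E C D B)
    \/
    (exists (I : Type) (C : I -> A -> Prop) (D : I -> B -> Prop),
        is_cf B I /\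
        (forall i, aleph0_subgraph E (C i) (D i) (sub (D i))) /\
        (forall i j, i <> j ->
           (forall a, ~ (C i a /\ C j a)) /\ (forall b, ~ (D i b /\ D j b))) /\
        (forall i, lt_card (sub (D i)) B) /\
        (forall Z : Type, lt_card Z B -> exists i, le_card Z (sub (D i)))).
Proof.
  intros gch A B E HA HB HAB Hexcl Hbip.
  destruct (classic (exists C D, aleph0_subgraph E C D B)) as [Hfull|Hno];
    [left; exact Hfull|right].
  destruct (cofinal_min_exists B) as [R [S0 HS0]].
  apply (disjoint_family_exists gch A B E HA HB HAB Hbip R S0 HS0).
  - intros M cfM HM Hsucc; apply Hexcl; exists (sub S0), M.
    split; [apply (cofinal_min_is_cf B R S0 HS0)|split; [split|]; auto].
  - intros C HC; apply lt_card_iff; intros HD; apply Hno; exists C, (heavy A B E C).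
    split; [auto|split; [apply cantor_bernstein; [apply le_card_sub|auto]|auto]].
Qed.
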